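(* Let $S$ be an entropy function for a finite set $X$, $X'\subset X$, and $S'(A):=\min_{\hat A\subseteq X\setminus X'}S(A\cup\hat A)$ for $A\subseteq X'$. Then $F_{S'}$ is the intersection of $F_S$ with the subspace $\mathbb R^{X'}\subseteq\mathbb R^X$ (functions vanishing on $X\setminus X'$).
   Context: An entropy function for a finite set $X$ is a function $S:2^X\to[0,\infty)$ with $S(\emptyset)=0$, $S(A)+S(B)\ge S(A\cap B)+S(A\cup B)$ and $S(A)+S(B)\ge S(A\setminus B)+S(B\setminus A)$ for all $A,B\subseteq X$. An EDF for $S$ is a function $f:X\to\mathbb R$ (a vector in $\mathbb R^X$) with $\big|\sum_{x\in A}f(x)\big|\le S(A)$ for all $A\subseteq X$; $F_S$ is the set of all EDFs for $S$. $S'$ is an entropy function for $X'$. *)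

From HB Require Import structures.
From mathcomp Require Import all_boot all_order all_algebra.
From mathcomp Require Import reals.
Set Implicit Arguments. Unset Strict Implicit. Unset Printing Implicit Defensive.
Import Order.TTheory GRing.Theory Num.Theory.
Local Open Scope ring_scope.

Definition entropy_function (R : realType) (T : finType) (S : {set T} -> R) : Prop :=
  [/\ S set0 = 0,
      (forall A, 0 <= S A),
      (forall A B, S (A :&: B) + S (A :|: B) <= S A + S B) &
      (forall A B, S (A :\: B) + S (B :\: A) <= S A + S B)].

Definition is_EDF (R : realType) (T : finType) (S : {set T} -> R) (f : T -> R) : Prop :=
  forall A : {set T}, `| \sum_(x in A) f x | <= S A.

Definition subT (T : finType) (X' : {set T}) : finType := {x : T | x \in X'}.

Definition restr_entropy (R : realType) (T : finType) (S : {set T} -> R)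
    (X' : {set T}) (A : {set subT X'}) : R :=
  \big[Num.min/S (val @: A)]_(Ah : {set T} | Ah \subset ~: X') S ((val @: A) :|: Ah).
Arguments restr_entropy {R T} S X' A.

From HB Require Import structures.
From mathcomp Require Import all_boot all_order all_algebra.
From mathcomp Require Import reals.
Import Order.TTheory GRing.Theory Num.Theory.
Local Open Scope ring_scope.

(* Neither direction uses the entropy axioms.  If f vanishes off X', then
   sum_A f = sum_(A ∪ Â) f for every Â ⊆ X \ X', so a bound by S on all the
   sets A ∪ Â is a bound by their minimum S'(A).  Conversely, for B ⊆ X,
   sum_B f = sum_(B ∩ X') f ≤ S'(B ∩ X') ≤ S((B ∩ X') ∪ (B \ X')) = S(B). *)

Section RestrictedEntropy.
Variables (R : realType) (X : finType) (S : {set X} -> R) (X' : {set X}).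

Lemma le_restr_entropy (A : {set subT X'}) (c : R) :
  (forall Ah : {set X}, Ah \subset ~: X' -> c <= S (val @: A :|: Ah)) ->
  c <= restr_entropy S X' A.
Proof.
move=> cS; apply: le_bigmin => //.
by rewrite -[val @: A]setU0 cS ?sub0set.
Qed.

Lemma restr_entropy_le (A : {set subT X'}) (Ah : {set X}) :
  Ah \subset ~: X' -> restr_entropy S X' A <= S (val @: A :|: Ah).
Proof. exact: bigmin_le_cond. Qed.

Lemma val_imset_sub (A : {set subT X'}) : val @: A \subset X'.
Proof. by apply/subsetP => _ /imsetP[y _ ->]; exact: valP. Qed.

Lemma val_imset_preim (B : {set X}) :
  val @: [set y : subT X' | val y \in B] = B :&: X'.
Proof.
apply/setP => x; rewrite inE; apply/imsetP/andP => [[y]|[xB xX']].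
  by rewrite inE => yB ->; split=> //; exact: valP.
by exists (exist _ x xX'); rewrite ?inE.
Qed.

Variable f : X -> R.
Hypothesis f_supp : forall x, x \notin X' -> f x = 0.

Lemma sum_setI_supp (C : {set X}) : \sum_(x in C) f x = \sum_(x in C :&: X') f x.
Proof.
rewrite (big_setID X') /= [X in _ + X]big1 ?addr0 // => x.
by rewrite inE => /andP[/f_supp].
Qed.

Lemma sum_val_imset (A : {set subT X'}) :
  \sum_(y in A) f (val y) = \sum_(x in val @: A) f x.
Proof. by rewrite big_imset //= => y z _ _; exact: val_inj. Qed.

Lemma EDF_restr_entropy :
  is_EDF S f -> is_EDF (restr_entropy S X') (fun y : subT X' => f (val y)).
Proof.
move=> edf A; apply: le_restr_entropy => Ah AhX'.
have AhX'0 : Ah :&: X' = set0.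
  by apply/eqP; rewrite setI_eq0 disjoints_subset.
have AX' : val @: A = (val @: A :|: Ah) :&: X'.
  by rewrite setIUl AhX'0 setU0 (setIidPl (val_imset_sub A)).
by rewrite sum_val_imset {1}AX' -sum_setI_supp.
Qed.

Lemma EDF_of_restr_entropy :
  is_EDF (restr_entropy S X') (fun y : subT X' => f (val y)) -> is_EDF S f.
Proof.
move=> edf B; pose A := [set y : subT X' | val y \in B].
have BX' : B :\: X' \subset ~: X' by rewrite setDE subsetIr.
rewrite sum_setI_supp -val_imset_preim -sum_val_imset.
apply: le_trans (edf A) (le_trans (restr_entropy_le A (B :\: X') BX') _).
by rewrite val_imset_preim setID.
Qed.

End RestrictedEntropy.

Theorem corollary28 (R : realType) (X : finType) (S : {set X} -> R) (X' : {set X}) :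
  entropy_function S ->
  forall f : X -> R,
    (is_EDF S f /\ (forall x, x \notin X' -> f x = 0)) <->
    ((forall x, x \notin X' -> f x = 0) /\
     is_EDF (restr_entropy S X') (fun y : subT X' => f (val y))).
Proof.
move=> _ f; split=> [[edf f_supp]|[f_supp edf]]; split=> //.
- exact: EDF_restr_entropy.
- exact: EDF_of_restr_entropy edf.
Qed.
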